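(* Let $\tau = \frac{1+\sqrt{5}}{2}$. Then $$\tau = -\sum_{k=1}^{\infty} \frac{\varphi(k)}{k} \log\left(1 - \frac{1}{\tau^k}\right), \qquad \frac{1}{\tau} = -\sum_{k=1}^{\infty} \frac{\mu(k)}{k} \log\left(1 - \frac{1}{\tau^k}\right).$$
   Context: $\tau=\frac{1+\sqrt5}{2}$ is the golden ratio. $\varphi(k)$ is Euler's totient function (the number of integers $1\le j\le k$ with $\gcd(j,k)=1$). $\mu(k)$ is the Möbius function: $\mu(1)=1$, $\mu(k)=0$ if $k$ is not squarefree, and $\mu(k)=(-1)^r$ if $k$ is squarefree with $r$ distinct prime factors. $\log$ denotes the natural logarithm. *)

From Stdlib Require Import Reals Lra Lia Arith List.
Import ListNotations.
From Stdlib Require Import Bool.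
Local Open Scope bool_scope.
Open Scope R_scope.

Definition tau : R := (1 + sqrt 5) / 2.

Definition phi (k : nat) : nat :=
  length (filter (fun j => Nat.eqb (Nat.gcd j k) 1) (seq 1 k)).

Definition is_primeb (p : nat) : bool :=
  Nat.ltb 1 p &&
  forallb (fun d => negb (Nat.eqb (p mod d) 0)) (seq 2 (p - 2)).

Definition squarefreeb (k : nat) : bool :=
  forallb (fun d => negb (Nat.eqb (k mod (d * d)) 0)) (seq 2 k).

Definition omega (k : nat) : nat :=
  length (filter (fun p => is_primeb p && Nat.eqb (k mod p) 0) (seq 1 k)).

Definition mu (k : nat) : R :=
  if squarefreeb k then (-1) ^ omega k else 0.

(* Expanding -ln(1 - y) = sum_{m>=1} y^m/m at y = x^k and collecting the
   terms with km = n gives, for 0 < x < 1 and coefficients with |c k| <= k,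
     sum_k c_k/k (-ln(1 - x^k)) = sum_n x^n/n * (sum_{d|n} c_d).
   With Gauss's identity sum_{d|n} phi(d) = n the right side is the geometric
   series x/(1-x), and with sum_{d|n} mu(d) = [n = 1] it is just x.  For x = 1/tau,
   x/(1-x) = tau because tau^2 = tau + 1. *)

From Stdlib Require Import Reals Lra Lia Arith List Bool Classical.
From Coquelicot Require Import Coquelicot.
From mathcomp Require all_boot cyclic.
Open Scope R_scope.

Fixpoint psum (F : nat -> R) (n : nat) : R :=
  match n with O => 0 | S n => psum F n + F n end.

Lemma psum_ext F G n : (forall i, (i < n)%nat -> F i = G i) -> psum F n = psum G n.
Proof.
  induction n as [|n IH]; intros H; simpl; [reflexivity|].
  rewrite IH by (intros; apply H; lia). rewrite (H n) by lia. reflexivity.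
Qed.

Lemma psum_add F G n : psum (fun i => F i + G i) n = psum F n + psum G n.
Proof. induction n; simpl; lra. Qed.

Lemma psum_scal a F n : psum (fun i => a * F i) n = a * psum F n.
Proof. induction n; simpl; [ring | rewrite IHn; ring]. Qed.

Lemma psum_zero_tail F n m : (n <= m)%nat ->
  (forall i, (n <= i < m)%nat -> F i = 0) -> psum F m = psum F n.
Proof.
  intros Hnm H. induction Hnm as [|m Hnm IH]; [reflexivity|].
  simpl. rewrite IH by (intros; apply H; lia). rewrite H by lia. ring.
Qed.

Lemma psum_exchange (H : nat -> nat -> R) a b :
  psum (fun i => psum (fun j => H i j) b) a = psum (fun j => psum (fun i => H i j) a) b.
Proof.
  induction a as [|a IH]; simpl.
  - induction b; simpl; lra.
  - rewrite IH, <- psum_add. reflexivity.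
Qed.

Lemma psum_abs_bound F n B :
  (forall i, (i < n)%nat -> Rabs (F i) <= B) -> Rabs (psum F n) <= INR n * B.
Proof.
  induction n as [|n IH]; intros H; simpl psum.
  - rewrite Rabs_R0. simpl. lra.
  - rewrite S_INR. eapply Rle_trans; [apply Rabs_triang|].
    assert (IHn := IH (fun i Hi => H i ltac:(lia))). specialize (H n ltac:(lia)). lra.
Qed.

Lemma sum_n_psum (a : nat -> R) N : sum_n a N = psum a (S N).
Proof.
  induction N as [|N IH]; [rewrite sum_O; simpl; ring|].
  rewrite sum_Sn, IH. reflexivity.
Qed.

Lemma is_series_psum (a : nat -> R) (l : R) : is_lim_seq (psum a) l -> is_series a l.
Proof.
  intros H. apply is_lim_seq_incr_1 in H.
  apply (is_lim_seq_ext _ (sum_n a)) in H; [exact H|].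
  intros N. symmetry. apply sum_n_psum.
Qed.

Lemma psum_is_series (a : nat -> R) (l : R) : is_series a l -> is_lim_seq (psum a) l.
Proof.
  intros H. apply is_lim_seq_incr_1.
  apply (is_lim_seq_ext (sum_n a)); [apply sum_n_psum | exact H].
Qed.

Definition divides (d n : nat) : bool := Nat.eqb (n mod d) 0.

Definition divisor_sum (c : nat -> R) (n : nat) : R :=
  psum (fun i => if divides (S i) n then c (S i) else 0) n.

Lemma psum_multiples (G : nat -> R) k N : (1 <= k)%nat ->
  psum (fun j => G (k * S j)%nat) (N / k)
  = psum (fun i => if divides k (S i) then G (S i) else 0) N.
Proof.
  intros Hk. induction N as [|N IH]; [rewrite Nat.Div0.div_0_l; reflexivity|].
  change (psum ?F (S N)) with (psum F N + F N). rewrite <- IH. unfold divides.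
  assert (Hdiv := Nat.div_mod N k ltac:(lia)).
  assert (Hmod := Nat.mod_upper_bound N k ltac:(lia)).
  destruct (Nat.eq_dec (N mod k) (k - 1)) as [E|E].
  - (* [N + 1] is a multiple of [k]: one new term *)
    assert (Hq : (S (N / k) = S N / k)%nat) by (apply (Nat.div_unique _ _ _ 0%nat); nia).
    assert (Hr : (0 = S N mod k)%nat) by (apply (Nat.mod_unique _ _ (S (N / k))); nia).
    rewrite <- Hq, <- Hr. cbn [psum]. rewrite Nat.eqb_refl. do 2 f_equal. nia.
  - assert (Hq : (N / k = S N / k)%nat) by (apply (Nat.div_unique _ _ _ (S (N mod k))); nia).
    assert (Hr : (S (N mod k) = S N mod k)%nat) by (apply (Nat.mod_unique _ _ (N / k)); nia).
    rewrite <- Hq, <- Hr. cbv beta. simpl Nat.eqb. cbv iota. ring.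
Qed.

Lemma count_filter_seq (f : nat -> bool) a n :
  INR (length (filter f (seq a n))) = psum (fun i => if f (a + i)%nat then 1 else 0) n.
Proof.
  induction n as [|n IH]; [reflexivity|].
  rewrite seq_S, filter_app, length_app, plus_INR, IH. cbn [psum filter].
  destruct (f (a + n)%nat); simpl; ring.
Qed.

Lemma psum_indicator p m : (1 <= p <= m)%nat ->
  psum (fun i => if Nat.eqb (S i) p then 1 else 0) m = 1.
Proof.
  intros Hp. induction m as [|m IH]; [lia|]. cbn [psum].
  destruct (Nat.eq_dec p (S m)) as [->|Hne].
  - rewrite Nat.eqb_refl, (psum_zero_tail _ 0 m); [simpl; ring | lia |].
    intros i Hi. destruct (Nat.eqb_spec (S i) (S m)); [lia | reflexivity].
  - rewrite IH by lia. destruct (Nat.eqb_spec (S m) p); [lia | ring].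
Qed.

Lemma divides_spec d n : divides d n = true <-> Nat.divide d n.
Proof. unfold divides. rewrite Nat.eqb_eq. apply Nat.Lcm0.mod_divide. Qed.

Lemma divides_false d n : divides d n = false <-> ~ Nat.divide d n.
Proof. rewrite <- divides_spec. destruct (divides d n); intuition congruence. Qed.

Lemma prime_spec p : is_primeb p = true <->
  (1 < p)%nat /\ forall d, (2 <= d < p)%nat -> ~ Nat.divide d p.
Proof.
  unfold is_primeb. rewrite Bool.andb_true_iff, Nat.ltb_lt, forallb_forall.
  split; intros [Hp H]; split; try exact Hp; intros d Hd.
  - specialize (H d ltac:(apply in_seq; lia)).
    apply Bool.negb_true_iff, divides_false in H. exact H.
  - apply in_seq in Hd. apply Bool.negb_true_iff, divides_false, H. lia.
Qed.

Section Primes.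
Variable p : nat.
Hypothesis Hp : is_primeb p = true.

Lemma prime_gt1 : (1 < p)%nat.
Proof. apply prime_spec, Hp. Qed.

Lemma prime_divisor_cases d : Nat.divide d p -> d = 1%nat \/ d = p.
Proof.
  intros Hd. apply prime_spec in Hp as [H1 H2].
  assert (d <> 0%nat) by (intros ->; apply Nat.divide_0_l in Hd; lia).
  assert (d <= p)%nat by (apply Nat.divide_pos_le; [lia | exact Hd]).
  destruct (Nat.eq_dec d 1); [auto|]. destruct (Nat.eq_dec d p); [auto|].
  exfalso. apply (H2 d); [lia | exact Hd].
Qed.

Lemma prime_coprime a : ~ Nat.divide p a -> Nat.gcd p a = 1%nat.
Proof.
  intros Ha. destruct (prime_divisor_cases _ (Nat.gcd_divide_l p a)) as [H|H]; [exact H|].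
  exfalso. apply Ha. rewrite <- H. apply Nat.gcd_divide_r.
Qed.

Lemma prime_euclid a b : Nat.divide p (a * b) -> Nat.divide p a \/ Nat.divide p b.
Proof.
  intros H. destruct (classic (Nat.divide p a)) as [Ha|Ha]; [left; exact Ha|].
  right. apply (Nat.gauss p a b H), prime_coprime, Ha.
Qed.

End Primes.

Lemma exists_prime_divisor n : (2 <= n)%nat -> exists p, is_primeb p = true /\ Nat.divide p n.
Proof.
  induction n as [n IH] using (well_founded_induction lt_wf). intros Hn.
  destruct (is_primeb n) eqn:Hpn; [exists n; split; [exact Hpn | apply Nat.divide_refl]|].
  assert (exists d, (2 <= d < n)%nat /\ Nat.divide d n) as [d [Hd Hdn]].
  { apply NNPP. intros Hno. assert (is_primeb n = true); [|congruence].
    apply prime_spec. split; [lia|]. intros d Hd Hdn. apply Hno. exists d. auto. }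
  destruct (IH d ltac:(lia) ltac:(lia)) as [p [Hp Hpd]].
  exists p. split; [exact Hp | apply Nat.divide_trans with d; assumption].
Qed.

Lemma squarefree_spec k : (1 <= k)%nat ->
  squarefreeb k = true <-> forall d, (2 <= d)%nat -> ~ Nat.divide (d * d) k.
Proof.
  intros Hk. unfold squarefreeb. rewrite forallb_forall. split.
  - intros H d Hd Hdiv.
    assert (d * d <= k)%nat by (apply Nat.divide_pos_le; [lia | exact Hdiv]).
    specialize (H d ltac:(apply in_seq; nia)).
    apply Bool.negb_true_iff, divides_false in H. exact (H Hdiv).
  - intros H d Hd. apply in_seq in Hd.
    apply Bool.negb_true_iff, divides_false, H. lia.
Qed.

Lemma omega_as_sum k B : (1 <= k <= B)%nat ->
  INR (omega k) = psum (fun i => if is_primeb (S i) && divides (S i) k then 1 else 0) B.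
Proof.
  intros Hk. unfold omega. rewrite count_filter_seq.
  symmetry. apply psum_zero_tail; [lia|]. intros i Hi.
  change ((if is_primeb (S i) && divides (S i) k then 1 else 0) = 0).
  replace (divides (S i) k) with false; [rewrite andb_false_r; reflexivity|].
  symmetry. apply divides_false. intros D. apply Nat.divide_pos_le in D; lia.
Qed.

Section PrimeFactor.
Variables p e : nat.
Hypothesis Hp : is_primeb p = true.
Hypothesis He : (1 <= e)%nat.

Lemma squarefree_mul_prime : ~ Nat.divide p e -> squarefreeb (p * e) = squarefreeb e.
Proof.
  intros Hpe. assert (Hp1 := prime_gt1 p Hp). apply Bool.eq_true_iff_eq.
  rewrite (squarefree_spec (p * e)), (squarefree_spec e) by nia. split.
  - intros H d Hd Hdiv. apply (H d Hd), Nat.divide_mul_r, Hdiv.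
  - intros H d Hd Hdiv. destruct (classic (Nat.divide p d)) as [[t ->]|Hpd].
    + (* [p^2 t^2 | p e] forces [p | e] *)
      apply Hpe. destruct Hdiv as [z Hz]. exists (z * t * t)%nat.
      apply (Nat.mul_cancel_l _ _ p); [lia|]. rewrite Hz. ring.
    + apply (H d Hd), (Nat.gauss _ p); [exact Hdiv|].
      rewrite Nat.gcd_comm. apply (prime_coprime p Hp).
      intros D. apply (prime_euclid p Hp) in D. tauto.
Qed.

Lemma mu_mul_prime_multiple : Nat.divide p e -> mu (p * e) = 0.
Proof.
  intros [z ->]. assert (Hp1 := prime_gt1 p Hp). unfold mu.
  destruct (squarefreeb (p * (z * p))) eqn:E; [|reflexivity]. exfalso.
  apply (proj1 (squarefree_spec (p * (z * p)) ltac:(nia)) E p); [lia|]. exists z. ring.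
Qed.

Lemma prime_divides_mul_other q : is_primeb q = true -> q <> p ->
  Nat.divide q (p * e) <-> Nat.divide q e.
Proof.
  intros Hq Hqp. split; [|apply Nat.divide_mul_r].
  intros D. destruct (prime_euclid q Hq p e D) as [Dp|De]; [|exact De].
  destruct (prime_divisor_cases p Hp q Dp) as [->|]; [|congruence].
  pose proof (prime_gt1 1 Hq). lia.
Qed.

Lemma omega_mul_prime : ~ Nat.divide p e -> omega (p * e) = S (omega e).
Proof.
  intros Hpe. assert (Hp1 := prime_gt1 p Hp). apply INR_eq.
  rewrite S_INR, <- (psum_indicator p (p * e)) by nia.
  rewrite !(omega_as_sum _ (p * e)), <- psum_add by nia.
  apply psum_ext. intros i _.
  destruct (Nat.eq_dec (S i) p) as [Ei|Ei].
  - rewrite Ei, Nat.eqb_refl, Hp.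
    replace (divides p (p * e)) with true
      by (symmetry; apply divides_spec, Nat.divide_factor_l).
    replace (divides p e) with false by (symmetry; apply divides_false, Hpe).
    simpl. ring.
  - destruct (Nat.eqb_spec (S i) p); [contradiction|].
    destruct (is_primeb (S i)) eqn:Hq; simpl; [|ring].
    destruct (divides (S i) e) eqn:Hd.
    + replace (divides (S i) (p * e)) with true; [ring|].
      symmetry. apply divides_spec, Nat.divide_mul_r, divides_spec, Hd.
    + replace (divides (S i) (p * e)) with false; [ring|].
      symmetry. apply divides_false. rewrite prime_divides_mul_other by assumption.
      apply divides_false, Hd.
Qed.

Lemma mu_mul_prime_coprime : ~ Nat.divide p e -> mu (p * e) = - mu e.
Proof.
  intros Hpe. unfold mu.
  rewrite squarefree_mul_prime, omega_mul_prime by assumption.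
  destruct (squarefreeb e); simpl; ring.
Qed.

End PrimeFactor.

Lemma divides_cofactor p m d : is_primeb p = true -> ~ Nat.divide p d ->
  Nat.divide d (p * m) -> Nat.divide d m.
Proof.
  intros Hp Hpd Hd. apply (Nat.gauss _ p); [exact Hd|].
  rewrite Nat.gcd_comm. apply prime_coprime; assumption.
Qed.

Lemma divisor_sum_prime_split (c : nat -> R) p m : is_primeb p = true -> (1 <= m)%nat ->
  divisor_sum c (p * m)
  = psum (fun i => if divides (S i) m
                   then (if divides p (S i) then 0 else c (S i)) + c (p * S i)%nat
                   else 0) m.
Proof.
  intros Hp Hm. assert (Hp1 := prime_gt1 p Hp). unfold divisor_sum.
  rewrite (psum_ext _ (fun i => (if divides p (S i) then 0
                                  else if divides (S i) (p * m) then c (S i) else 0)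
                              + (if divides p (S i)
                                 then if divides (S i) (p * m) then c (S i) else 0 else 0)))
    by (intros i _; destruct (divides p (S i)); ring).
  rewrite psum_add, <- (psum_multiples (fun d => if divides d (p * m) then c d else 0))
    by lia.
  replace (p * m / p)%nat with m by (rewrite Nat.mul_comm, Nat.div_mul; lia).
  (* divisors of [p m] prime to [p] are at most [m] *)
  rewrite (psum_zero_tail _ m (p * m)); [| nia |].
  - rewrite <- psum_add. apply psum_ext. intros i _.
    destruct (divides (S i) m) eqn:Hdm.
    + replace (divides (p * S i) (p * m)) with true
        by (symmetry; apply divides_spec, Nat.mul_divide_mono_l, divides_spec, Hdm).
      replace (divides (S i) (p * m)) with true
        by (symmetry; apply divides_spec, Nat.divide_mul_r, divides_spec, Hdm).
      destruct (divides p (S i)); ring.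
    + replace (divides (p * S i) (p * m)) with false.
      2:{ symmetry. apply divides_false. rewrite Nat.mul_divide_cancel_l by lia.
          apply divides_false, Hdm. }
      destruct (divides p (S i)) eqn:Hpd; [ring|].
      replace (divides (S i) (p * m)) with false; [ring|].
      symmetry. apply divides_false. intros D. apply divides_false in Hdm. apply Hdm.
      apply (divides_cofactor p); [exact Hp | apply divides_false, Hpd | exact D].
  - intros i Hi. destruct (divides p (S i)) eqn:Hpd; [reflexivity|].
    destruct (divides (S i) (p * m)) eqn:Hd; [|reflexivity]. exfalso.
    apply divides_false in Hpd. apply divides_spec in Hd.
    apply (divides_cofactor p m) in Hd; [|exact Hp|exact Hpd].
    apply Nat.divide_pos_le in Hd; lia.
Qed.

Lemma mobius_divisor_sum n : (1 <= n)%nat -> divisor_sum mu n = if Nat.eqb n 1 then 1 else 0.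
Proof.
  intros Hn. destruct (Nat.eqb_spec n 1) as [->|Hn1].
  { unfold divisor_sum, mu, omega. simpl. lra. }
  destruct (exists_prime_divisor n ltac:(lia)) as [p [Hp [m ->]]].
  assert (Hp1 := prime_gt1 p Hp).
  rewrite Nat.mul_comm, divisor_sum_prime_split by (assumption || nia).
  rewrite (psum_zero_tail _ 0 m); [reflexivity | lia |]. intros i _.
  destruct (divides (S i) m); [|reflexivity].
  (* [mu (p d) = - mu d] if [p does not divide d], and [mu (p d) = 0] otherwise *)
  destruct (divides p (S i)) eqn:Hpd.
  - rewrite mu_mul_prime_multiple by (assumption || lia || apply divides_spec, Hpd). ring.
  - rewrite mu_mul_prime_coprime by (assumption || lia || apply divides_false, Hpd). ring.
Qed.

Lemma phi_le k : (phi k <= k)%nat.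
Proof. unfold phi. rewrite <- (length_seq k 1) at 2. apply filter_length_le. Qed.

Module Totient.
Import all_boot.
Local Open Scope nat_scope.

Lemma modnE n d : Nat.modulo n d = n %% d.
Proof.
  case: d => [|d]; first by rewrite modn0; case: n.
  symmetry; apply: (Nat.mod_unique _ _ (n %/ d.+1)); first by apply/ltP; rewrite ltn_mod.
  by rewrite {1}(divn_eq n d.+1) mulnC.
Qed.

Lemma gcdnE a b : Nat.gcd a b = gcdn a b.
Proof.
  have dvdE d m : Nat.divide d m <-> d %| m.
    by split=> [[k ->]|/dvdnP [k ->]]; [apply/dvdnP; exists k | exists k].
  apply: Nat.gcd_unique.
  - by apply/dvdE/dvdn_gcdl.
  - by apply/dvdE/dvdn_gcdr.
  - by move=> q /dvdE h1 /dvdE h2; apply/dvdE; rewrite dvdn_gcd h1 h2.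
Qed.

Lemma eqbE a b : Nat.eqb a b = (a == b).
Proof. by case: (Nat.eqb_spec a b) => [->|/eqP h]; [rewrite eqxx | apply/esym/negbTE]. Qed.

Lemma length_filter_seq (f : nat -> bool) a n :
  length (List.filter f (List.seq a n)) = \sum_(0 <= i < n) f (a + i).
Proof.
  elim: n a => [|n IH] a; first by rewrite big_geq.
  rewrite big_nat_recl //= addn0.
  under eq_bigr do rewrite addnS -addSn.
  by rewrite -IH; case: (f a).
Qed.

Lemma phi_totient k : phi k = totient k.
Proof.
  rewrite /phi length_filter_seq totient_count_coprime.
  case: k => [|k]; first by rewrite !big_geq.
  rewrite big_nat_recr // [RHS]big_nat_recl //.
  under eq_bigr => i _ do rewrite add1n gcdnE eqbE gcdnC.
  by rewrite add1n gcdnE gcdnn eqbE /coprime gcdn0 addnC.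
Qed.

Lemma INR_sum F n : INR (\sum_(0 <= i < n) F i) = psum (fun i => INR (F i)) n.
Proof.
  elim: n => [|n IH]; first by rewrite big_geq.
  by rewrite big_nat_recr //= plus_INR IH.
Qed.

Lemma divisor_sum_phi n : divisor_sum (fun k => INR (phi k)) n = INR n.
Proof.
  rewrite -{2}(cyclic.sum_totient_dvd n) big_mkcond /=.
  rewrite -(big_mkord xpredT (fun d => if d %| n then totient d else 0)).
  rewrite big_nat_recl // dvd0n.
  case: n => [|n]; first by rewrite big_geq.
  rewrite add0n INR_sum.
  apply: psum_ext => i _.
  by rewrite /divides modnE eqbE phi_totient /dvdn; case: (_ == 0).
Qed.
End Totient.

Lemma psum_geom y M : y <> 1 -> psum (fun m => y ^ m) M = (1 - y ^ M) / (1 - y).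
Proof. intros H. induction M as [|M IH]; simpl; [field; lra | rewrite IH; field; lra]. Qed.

(* The truncated series [sum_{m<M} y^(m+1)/(m+1)] of [-ln(1-y)]. *)
Definition log_trunc (y : R) (M : nat) : R := psum (fun m => y ^ S m / INR (S m)) M.

Lemma log_trunc_0 M : log_trunc 0 M = 0.
Proof.
  unfold log_trunc. induction M as [|M IH]; [reflexivity|].
  cbn [psum]. rewrite IH. simpl. unfold Rdiv. ring.
Qed.

Lemma is_derive_log_trunc M t : is_derive (fun s => log_trunc s M) t (psum (fun m => t ^ m) M).
Proof.
  induction M as [|M IH]; unfold log_trunc; cbn [psum].
  - auto_derive; auto.
  - apply (is_derive_plus (fun s => psum (fun m => s ^ S m / INR (S m)) M)); [apply IH|].
    assert (HM : INR M + 1 <> 0) by (pose proof (pos_INR M); lra).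
    rewrite S_INR. auto_derive; [auto|].
    change (match M with O => 1 | S _ => INR M + 1 end) with (INR (S M)).
    rewrite S_INR. field. exact HM.
Qed.

(* Tail estimate: [0 <= -ln(1-y) - log_trunc y M <= y^(M+1)/(1-y)] for [0 <= y < 1].
   The difference vanishes at 0 and has derivative [t^M/(1-t)]. *)
Lemma log_trunc_tail y M : 0 <= y < 1 ->
  0 <= - ln (1 - y) - log_trunc y M <= y ^ S M / (1 - y).
Proof.
  intros Hy. destruct (Req_dec y 0) as [->|Hy0].
  { rewrite log_trunc_0, !Rminus_0_r, ln_1. simpl. unfold Rdiv. lra. }
  set (g := fun t => - ln (1 - t) - log_trunc t M).
  destruct (MVT_cor2 g (fun t => t ^ M / (1 - t)) 0 y) as [c [Hmvt Hc]]; [lra| |].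
  - intros c Hc. apply is_derive_Reals.
    replace (c ^ M / (1 - c)) with (1 / (1 - c) - psum (fun m => c ^ m) M)
      by (rewrite psum_geom by lra; field; lra).
    apply (is_derive_minus (fun t => - ln (1 - t))); [auto_derive; [lra | field; lra] |].
    apply is_derive_log_trunc.
  - assert (Hg0 : g 0 = 0) by (unfold g; rewrite log_trunc_0, !Rminus_0_r, ln_1; ring).
    change (g y) with (- ln (1 - y) - log_trunc y M) in Hmvt.
    rewrite Hg0, !Rminus_0_r in Hmvt. rewrite Hmvt.
    assert (0 <= c ^ M <= y ^ M) by (split; [apply pow_le | apply pow_incr]; lra).
    assert (0 < / (1 - c) <= / (1 - y))
      by (split; [apply Rinv_0_lt_compat | apply Rinv_le_contravar]; lra).
    unfold Rdiv. simpl. split; [apply Rmult_le_pos; [apply Rmult_le_pos|]; lra|].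
    assert (c ^ M * / (1 - c) <= y ^ M * / (1 - y)) by (apply Rmult_le_compat; lra).
    nra.
Qed.

(* [n x^n -> 0]: the derived series of the geometric series has radius 1. *)
Lemma is_lim_seq_n_pow x : 0 < x < 1 -> is_lim_seq (fun n => INR n * x ^ n) 0.
Proof.
  intros Hx.
  assert (Hrad : CV_radius (PS_derive (fun _ => 1)) = 1).
  { rewrite CV_radius_derive, (CV_radius_finite_DAlembert _ 1); [now rewrite Rinv_1 | | lra |].
    - intros _; lra.
    - apply (is_lim_seq_ext (fun _ => 1)); [intros; rewrite Rdiv_1_r, Rabs_R1; reflexivity|].
      apply is_lim_seq_const. }
  assert (Hser := CV_disk_inside (PS_derive (fun _ => 1)) x).
  rewrite Hrad, Rabs_right in Hser by lra. specialize (Hser (proj2 Hx)).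
  apply ex_series_lim_0, is_lim_seq_abs_0 in Hser.
  apply is_lim_seq_incr_1.
  apply (is_lim_seq_ext (fun n => PS_derive (fun _ => 1) n * x ^ n * x)).
  - intros n. unfold PS_derive. simpl. ring.
  - replace (Finite 0) with (Rbar_mult 0 x) by (simpl; f_equal; ring).
    apply is_lim_seq_scal_r, Hser.
Qed.

Lemma log_trunc_expand (c : nat -> R) x k K : (1 <= k)%nat ->
  c k / INR k * log_trunc (x ^ k) (K / k)
  = psum (fun i => if divides k (S i) then c k * (x ^ S i / INR (S i)) else 0) K.
Proof.
  intros Hk. unfold log_trunc. rewrite <- psum_scal.
  rewrite <- (psum_multiples (fun n => c k * (x ^ n / INR n))) by exact Hk.
  apply psum_ext. intros j _. rewrite pow_mult, mult_INR.
  field. split; apply not_0_INR; lia.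
Qed.

Lemma lambert_rearrangement (c : nat -> R) x K :
  psum (fun i => c (S i) / INR (S i) * log_trunc (x ^ S i) (K / S i)) K
  = psum (fun i => x ^ S i / INR (S i) * divisor_sum c (S i)) K.
Proof.
  rewrite (psum_ext _ (fun i => psum (fun j =>
             if divides (S i) (S j) then c (S i) * (x ^ S j / INR (S j)) else 0) K))
    by (intros; apply log_trunc_expand; lia).
  rewrite psum_exchange. apply psum_ext. intros j Hj.
  unfold divisor_sum. rewrite <- psum_scal.
  (* a divisor of [j+1] is at most [j+1] *)
  rewrite (psum_zero_tail _ (S j) K); [| lia |].
  - apply psum_ext. intros i _. destruct (divides (S i) (S j)); ring.
  - intros i Hi. unfold divides. rewrite Nat.mod_small by lia. reflexivity.
Qed.

Lemma pow_decr x a b : 0 <= x <= 1 -> (a <= b)%nat -> x ^ b <= x ^ a.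
Proof.
  intros Hx Hab. replace b with (a + (b - a))%nat by lia. rewrite pow_add.
  assert (0 <= x ^ a) by (apply pow_le; lra).
  assert (x ^ (b - a) <= 1) by (rewrite <- (pow1 (b - a)); apply pow_incr; lra).
  nra.
Qed.

Lemma log_trunc_tail_uniform x k K : 0 < x < 1 -> (1 <= k)%nat ->
  0 <= - ln (1 - x ^ k) - log_trunc (x ^ k) (K / k) <= x ^ S K / (1 - x).
Proof.
  intros Hx Hk.
  assert (Hxk : 0 <= x ^ k <= x) by (split; [apply pow_le | rewrite <- (pow_1 x) at 2; apply pow_decr]; lra || lia).
  destruct (log_trunc_tail (x ^ k) (K / k) ltac:(lra)) as [Hlo Hhi].
  split; [exact Hlo|]. eapply Rle_trans; [exact Hhi|].
  assert (Hdiv := Nat.div_mod K k ltac:(lia)).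
  assert (Hmod := Nat.mod_upper_bound K k ltac:(lia)).
  assert ((x ^ k) ^ S (K / k) <= x ^ S K) by (rewrite <- pow_mult; apply pow_decr; [lra | nia]).
  assert (/ (1 - x ^ k) <= / (1 - x)) by (apply Rinv_le_contravar; lra).
  assert (0 <= (x ^ k) ^ S (K / k)) by (apply pow_le; lra).
  unfold Rdiv. apply Rmult_le_compat; try assumption.
  apply Rlt_le, Rinv_0_lt_compat. lra.
Qed.

Lemma truncation_error_bound (c : nat -> R) x K : 0 < x < 1 ->
  (forall k, (1 <= k)%nat -> Rabs (c k) <= INR k) ->
  Rabs (psum (fun i => c (S i) / INR (S i)
                 * (- ln (1 - x ^ S i) - log_trunc (x ^ S i) (K / S i))) K)
  <= INR K * (x ^ S K / (1 - x)).
Proof.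
  intros Hx Hc. apply psum_abs_bound. intros i _.
  destruct (log_trunc_tail_uniform x (S i) K Hx ltac:(lia)) as [Hlo Hhi].
  assert (Hpos : 0 < INR (S i)) by (apply lt_0_INR; lia).
  assert (Hcoef : Rabs (c (S i) / INR (S i)) <= 1).
  { unfold Rdiv. rewrite Rabs_mult, Rabs_inv, (Rabs_right (INR (S i))) by lra.
    apply (Rmult_le_reg_r (INR (S i))); [exact Hpos|].
    rewrite Rmult_assoc, Rinv_l, Rmult_1_r, Rmult_1_l by lra. apply Hc. lia. }
  rewrite Rabs_mult, (Rabs_right (_ - _)) by lra.
  assert (0 <= Rabs (c (S i) / INR (S i))) by apply Rabs_pos.
  nra.
Qed.

Theorem lambert_log_series (c : nat -> R) (x L : R) : 0 < x < 1 ->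
  (forall k, (1 <= k)%nat -> Rabs (c k) <= INR k) ->
  is_series (fun n => x ^ S n / INR (S n) * divisor_sum c (S n)) L ->
  is_series (fun n => - (c (S n) / INR (S n)) * ln (1 - x ^ S n)) L.
Proof.
  intros Hx Hc Hmain. apply is_series_psum.
  set (err := fun K => psum (fun i => c (S i) / INR (S i)
                 * (- ln (1 - x ^ S i) - log_trunc (x ^ S i) (K / S i))) K).
  apply (is_lim_seq_ext
           (fun K => psum (fun n => x ^ S n / INR (S n) * divisor_sum c (S n)) K + err K)).
  { intros K. unfold err. rewrite <- lambert_rearrangement, <- psum_add.
    apply psum_ext. intros i _. ring. }
  rewrite <- (Rplus_0_r L). apply is_lim_seq_plus'; [apply psum_is_series, Hmain|].
  apply is_lim_seq_abs_0.
  apply (is_lim_seq_le_le (fun _ => 0) _ (fun K => INR K * x ^ K * (x / (1 - x)))).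
  - intros K. split; [apply Rabs_pos|].
    replace (INR K * x ^ K * (x / (1 - x))) with (INR K * (x ^ S K / (1 - x)))
      by (simpl; field; lra).
    apply truncation_error_bound; assumption.
  - apply is_lim_seq_const.
  - replace (Finite 0) with (Rbar_mult 0 (x / (1 - x))) by (simpl; f_equal; ring).
    apply is_lim_seq_scal_r, is_lim_seq_n_pow, Hx.
Qed.

Lemma tau_gt_1 : 1 < tau.
Proof. unfold tau. pose proof (sqrt_sqrt 5 ltac:(lra)). pose proof (sqrt_pos 5). nra. Qed.

Lemma inv_tau_bounds : 0 < / tau < 1.
Proof.
  pose proof tau_gt_1. split; [apply Rinv_0_lt_compat; lra|].
  rewrite <- Rinv_1. apply Rinv_lt_contravar; lra.
Qed.

(* [x = 1/tau] satisfies [x/(1-x) = tau], since [tau^2 = tau + 1]. *)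
Lemma tau_fixed_point : / tau * / (1 - / tau) = tau.
Proof.
  assert (Hsq : tau * tau = tau + 1).
  { unfold tau. pose proof (sqrt_sqrt 5 ltac:(lra)). field_simplify. nra. }
  pose proof tau_gt_1.
  replace (/ tau * / (1 - / tau)) with (/ (tau - 1)) by (field; lra).
  apply (Rmult_eq_reg_l (tau - 1)); [|lra]. rewrite Rinv_r by lra. nra.
Qed.

Lemma log_series_inv_tau (c : nat -> R) (L : R) :
  (forall k, (1 <= k)%nat -> Rabs (c k) <= INR k) ->
  is_series (fun n => (/ tau) ^ S n / INR (S n) * divisor_sum c (S n)) L ->
  infinite_sum (fun n => - (c (S n) / INR (S n)) * ln (1 - / tau ^ S n)) L.
Proof.
  intros Hc Hmain. apply is_series_Reals.
  apply (is_series_ext (fun n => - (c (S n) / INR (S n)) * ln (1 - (/ tau) ^ S n))).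
  - intros n. rewrite pow_inv. reflexivity.
  - apply lambert_log_series; [exact inv_tau_bounds | exact Hc | exact Hmain].
Qed.

(* The first identity: Gauss's identity turns the series into a geometric one. *)
Lemma series_phi :
  infinite_sum (fun n => - (INR (phi (S n)) / INR (S n)) * ln (1 - / tau ^ S n)) tau.
Proof.
  apply (log_series_inv_tau (fun k => INR (phi k))).
  - intros k _. rewrite Rabs_right by (apply Rle_ge, pos_INR). apply le_INR, phi_le.
  -
    pose proof inv_tau_bounds.
    apply (is_series_ext (fun n => scal (/ tau) ((/ tau) ^ n))).
    + intros n. rewrite Totient.divisor_sum_phi.
      assert (INR (S n) <> 0) by (apply not_0_INR; lia).
      change (scal (/ tau) ((/ tau) ^ n)) with (/ tau * (/ tau) ^ n).
      cbn [pow]. unfold Rdiv. rewrite Rmult_assoc, Rinv_l, Rmult_1_r by assumption. reflexivity.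
    + assert (Hgeom := is_series_geom (/ tau) ltac:(rewrite Rabs_right; lra)).
      apply (is_series_scal_l (/ tau)) in Hgeom.
      change (scal (/ tau) (/ (1 - / tau))) with (/ tau * / (1 - / tau)) in Hgeom.
      rewrite tau_fixed_point in Hgeom. exact Hgeom.
Qed.

(* The second identity: the Moebius divisor sum leaves only the term [n = 1]. *)
Lemma series_mu :
  infinite_sum (fun n => - (mu (S n) / INR (S n)) * ln (1 - / tau ^ S n)) (/ tau).
Proof.
  apply (log_series_inv_tau mu).
  - intros k Hk. apply Rle_trans with 1; [|apply (le_INR 1); exact Hk].
    unfold mu. destruct (squarefreeb k); [rewrite pow_1_abs | rewrite Rabs_R0]; lra.
  -
    apply is_series_psum, is_lim_seq_incr_1.
    apply (is_lim_seq_ext (fun _ => / tau)); [|apply is_lim_seq_const].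
    intros K. induction K as [|K IH].
    + cbn [psum]. rewrite mobius_divisor_sum by lia. simpl. field. pose proof tau_gt_1; lra.
    + change (psum ?F (S (S K))) with (psum F (S K) + F (S K)).
      rewrite <- IH, mobius_divisor_sum by lia. simpl. ring.
Qed.

(* Series indexed by n >= 0 with k = n+1. *)
Theorem lemma2 :
  infinite_sum
    (fun n : nat => - (INR (phi (S n)) / INR (S n)) * ln (1 - / tau ^ (S n)))
    tau
  /\
  infinite_sum
    (fun n : nat => - (mu (S n) / INR (S n)) * ln (1 - / tau ^ (S n)))
    (/ tau).
Proof. split; [exact series_phi | exact series_mu]. Qed.
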